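(* Let $H_0$ be an admissible Hamiltonian, $H_1(x)=\tfrac12x^TA\mathcal Hx$ (so $\nabla H_1=A\nabla H_0$), $f_0=J\nabla H_0$ and $f_1=J\nabla H_1$ (so $f_1=A^Tf_0$). Then for all $x$: $$f_0'(x)f_1(x)=f_1'(x)f_0(x),\qquad f_0'(x)f_1'(x)=f_1'(x)f_0'(x).$$
   Context: Fix an integer $n\ge 2$. Points of $\mathbb R^{2n}$ are $x=(x_1,\dots,x_{2n})^{T}$; write $u=(x_1,\dots,x_n)^T$. Let $X(u)$ be the $n\times n$ matrix with entries $X(u)_{ij}=x_{k}$ where $k\in\{1,\dots,n\}$, $k\equiv i+j-1 \pmod n$, and let $J(x)=\begin{pmatrix}0&X(u)\\-X(u)&0\end{pmatrix}$. Let $\mathcal P$ be the $n\times n$ cyclic shift matrix ($\mathcal P_{i,i+1}=1$ for $1\le i\le n-1$, $\mathcal P_{n,1}=1$, all other entries $0$) and $A=\begin{pmatrix}\mathcal P&0\\0&\mathcal P\end{pmatrix}$. An admissible Hamiltonian is a homogeneous quadratic form $H(x)=\tfrac12 x^T\mathcal H x$ with a constant symmetric matrix $\mathcal H=\nabla^2H$ satisfying $A\mathcal H=\mathcal H A^T$; $f'(x)$ denotes the Jacobi matrix of a vector field $f$. *)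

(* Vectors of R^m are functions nat -> R (only indices
   0..m-1 matter), matrices are functions nat -> nat -> R. Indices are 0-based. *)
From Stdlib Require Import Reals Arith List.
Import ListNotations.
Open Scope R_scope.

Definition vsum (m : nat) (f : nat -> R) : R :=
  fold_right Rplus 0 (map f (seq 0 m)).

Definition vec := nat -> R.
Definition mat := nat -> nat -> R.

Definition mulmv (m : nat) (M : mat) (v : vec) : vec :=
  fun i => vsum m (fun k => M i k * v k).
Definition mulmm (m : nat) (M N : mat) : mat :=
  fun i j => vsum m (fun k => M i k * N k j).
Definition trm (M : mat) : mat := fun i j => M j i.

(* X(u)_{ij} = x_k, k = i+j-1 mod n (1-based)  <=>  0-based: x_{(i+j) mod n} *)
Definition Xmat (n : nat) (x : vec) : mat :=
  fun i j => x ((i + j) mod n)%nat.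

Definition Jmat (n : nat) (x : vec) : mat :=
  fun i j =>
    if (i <? n)%nat then
      (if (j <? n)%nat then 0 else Xmat n x i (j - n)%nat)
    else
      (if (j <? n)%nat then - Xmat n x (i - n)%nat j else 0).

(* cyclic shift: P_{i,i+1} = 1, P_{n,1} = 1 (1-based) <=> P_{i,(i+1) mod n} = 1 (0-based) *)
Definition Pmat (n : nat) : mat :=
  fun i j => if (j =? (i + 1) mod n)%nat then 1 else 0.

Definition Amat (n : nat) : mat :=
  fun i j =>
    if (i <? n)%nat then
      (if (j <? n)%nat then Pmat n i j else 0)
    else
      (if (j <? n)%nat then 0 else Pmat n (i - n)%nat (j - n)%nat).

(* admissible Hamiltonian H(x) = 1/2 x^T Hm x: Hm symmetric, A Hm = Hm A^T *)
Definition admissible (n : nat) (Hm : mat) : Prop :=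
  (forall i j, (i < 2 * n)%nat -> (j < 2 * n)%nat -> Hm i j = Hm j i) /\
  (forall i j, (i < 2 * n)%nat -> (j < 2 * n)%nat ->
     mulmm (2 * n) (Amat n) Hm i j = mulmm (2 * n) Hm (trm (Amat n)) i j).

(* gradient of the quadratic form x |-> 1/2 x^T M x, i.e. 1/2 (M + M^T) x *)
Definition grad_quad (m : nat) (M : mat) (x : vec) : vec :=
  fun i => / 2 * (mulmv m M x i + mulmv m (trm M) x i).

Definition ham_field (n : nat) (M : mat) (x : vec) : vec :=
  mulmv (2 * n) (Jmat n x) (grad_quad (2 * n) M x).

Definition shift (x : vec) (j : nat) (t : R) : vec :=
  fun k => if (k =? j)%nat then x k + t else x k.

Definition is_jacobian (m : nat) (f : vec -> vec) (x : vec) (D : mat) : Prop :=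
  forall i j, (i < m)%nat -> (j < m)%nat ->
    derivable_pt_lim (fun t => f (shift x j t) i) 0 (D i j).

From Stdlib Require Import Reals List Lia Lra Permutation FunctionalExtensionality.
From Coquelicot Require Import Coquelicot.
Open Scope R_scope.

(* A = diag(P, P) is the permutation matrix of the blockwise cyclic shift [rot], so
   A^T v = v o unrot. Admissibility makes the Hessian commute with this permutation, and the
   Hankel structure of X(u) does the same for J. Writing f(x) = B(x, x) with
   B(y, z) = J(y) grad H(z), precomposing either argument of B with [unrot] precomposes its
   value with [unrot]. Hence f_1 = A^T f_0, f_1' = A^T f_0', and f_0' commutes with A^T, so
   f_0' f_1 = f_0' A^T f_0 = A^T f_0' f_0 = f_1' f_0 and likewise f_0' f_1' = f_1' f_0'. *)

Definition unit_vec (j : nat) : vec := fun k => if (k =? j)%nat then 1 else 0.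

Lemma vsum_S m f : vsum (S m) f = vsum m f + f m.
Proof.
  unfold vsum. rewrite seq_S, map_app, fold_right_app. simpl.
  induction (map f (seq 0 m)) as [|a l IH]; simpl; [ring | rewrite IH; ring].
Qed.

Lemma vsum_ext m f g : (forall k, (k < m)%nat -> f k = g k) -> vsum m f = vsum m g.
Proof. induction m; intros H; [reflexivity|]. rewrite !vsum_S, IHm, H; auto. Qed.

Lemma vsum_add m f g : vsum m (fun k => f k + g k) = vsum m f + vsum m g.
Proof. induction m; [unfold vsum; simpl; ring|]. rewrite !vsum_S, IHm; ring. Qed.

Lemma vsum_scal m c f : vsum m (fun k => c * f k) = c * vsum m f.
Proof. induction m; [unfold vsum; simpl; ring|]. rewrite !vsum_S, IHm; ring. Qed.

Lemma vsum_unit_vec m a v :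
  vsum m (fun k => v k * unit_vec a k) = if (a <? m)%nat then v a else 0.
Proof.
  unfold unit_vec. induction m; [reflexivity|]. rewrite vsum_S, IHm.
  destruct (Nat.ltb_spec a m), (Nat.ltb_spec a (S m)), (Nat.eqb_spec m a); subst; try lia; ring.
Qed.

Lemma vsum_unit_vec_lt m a v : (a < m)%nat -> vsum m (fun k => v k * unit_vec a k) = v a.
Proof. intros Ha. rewrite vsum_unit_vec. now destruct (Nat.ltb_spec a m); [|lia]. Qed.

Definition inverse_on (m : nat) (sigma tau : nat -> nat) : Prop :=
  forall k, (k < m)%nat ->
    (sigma k < m)%nat /\ (tau k < m)%nat /\ sigma (tau k) = k /\ tau (sigma k) = k.

Lemma inverse_on_sym m sigma tau : inverse_on m sigma tau -> inverse_on m tau sigma.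
Proof. intros H k Hk. destruct (H k Hk) as (? & ? & ? & ?). auto. Qed.

Lemma vsum_perm m sigma tau f :
  inverse_on m sigma tau -> vsum m (fun k => f (sigma k)) = vsum m f.
Proof.
  intros Hinv. unfold vsum. rewrite <- map_map.
  assert (Hperm : Permutation (seq 0 m) (map sigma (seq 0 m))).
  { apply NoDup_Permutation_bis; [apply seq_NoDup | now rewrite length_map |].
    intros k Hk. apply in_seq in Hk. destruct (Hinv k) as (_ & Htau & Hst & _); [lia|].
    rewrite <- Hst. apply in_map, in_seq. lia. }
  symmetry. induction (Permutation_map f Hperm); simpl; lra.
Qed.

Lemma vsum_mul_perm m sigma tau a w :
  inverse_on m sigma tau ->
  vsum m (fun k => a k * w (sigma k)) = vsum m (fun k => a (tau k) * w k).
Proof.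
  intros Hinv. rewrite <- (vsum_perm m sigma tau (fun k => a (tau k) * w k) Hinv).
  apply vsum_ext. intros k Hk. destruct (Hinv k Hk) as (_ & _ & _ & ->). reflexivity.
Qed.

Lemma mulmv_twisted m sigma tau (D0 D1 : mat) (w0 w1 : vec) i :
  inverse_on m sigma tau ->
  (forall i j, (i < m)%nat -> (j < m)%nat -> D0 (tau i) j = D0 i (sigma j)) ->
  (forall i j, (i < m)%nat -> (j < m)%nat -> D1 i j = D0 (tau i) j) ->
  (forall k, (k < m)%nat -> w1 k = w0 (tau k)) ->
  (i < m)%nat ->
  mulmv m D0 w1 i = mulmv m D1 w0 i.
Proof.
  intros Hinv Htwist HD1 Hw Hi. unfold mulmv.
  rewrite (vsum_ext _ _ (fun k => D0 i k * w0 (tau k))) by (intros; now rewrite Hw).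
  rewrite (vsum_mul_perm m tau sigma) by now apply inverse_on_sym.
  apply vsum_ext. intros k Hk. rewrite HD1, Htwist by auto. reflexivity.
Qed.

Definition cyc_succ (n r : nat) : nat := ((r + 1) mod n)%nat.
Definition cyc_pred (n r : nat) : nat := ((r + (n - 1)) mod n)%nat.

Definition rot (n i : nat) : nat :=
  if (i <? n)%nat then cyc_succ n i else (n + cyc_succ n (i - n))%nat.
Definition unrot (n i : nat) : nat :=
  if (i <? n)%nat then cyc_pred n i else (n + cyc_pred n (i - n))%nat.

Section CyclicShift.
Variable n : nat.
Hypothesis n_pos : (0 < n)%nat.

Lemma cyc_succ_lt r : (cyc_succ n r < n)%nat.
Proof. apply Nat.mod_upper_bound. lia. Qed.

Lemma cyc_pred_lt r : (cyc_pred n r < n)%nat.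
Proof. apply Nat.mod_upper_bound. lia. Qed.

Lemma add_n_mod r : (r < n)%nat -> ((r + n) mod n = r)%nat.
Proof.
  intros. rewrite <- (Nat.mul_1_l n) at 1. rewrite Nat.Div0.mod_add. now apply Nat.mod_small.
Qed.

Lemma cyc_pred_succ r : (r < n)%nat -> cyc_pred n (cyc_succ n r) = r.
Proof.
  intros. unfold cyc_pred, cyc_succ. rewrite Nat.Div0.add_mod_idemp_l.
  replace (r + 1 + (n - 1))%nat with (r + n)%nat by lia. now apply add_n_mod.
Qed.

Lemma cyc_succ_pred r : (r < n)%nat -> cyc_succ n (cyc_pred n r) = r.
Proof.
  intros. unfold cyc_pred, cyc_succ. rewrite Nat.Div0.add_mod_idemp_l.
  replace (r + (n - 1) + 1)%nat with (r + n)%nat by lia. now apply add_n_mod.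
Qed.

Lemma unrot_ltb i : (unrot n i <? n)%nat = (i <? n)%nat.
Proof.
  pose proof (cyc_pred_lt i). unfold unrot.
  destruct (Nat.ltb_spec i n); [apply Nat.ltb_lt | apply Nat.ltb_ge]; lia.
Qed.

Lemma rot_lo i : (i < n)%nat -> rot n i = cyc_succ n i.
Proof. intros. unfold rot. now destruct (Nat.ltb_spec i n); [|lia]. Qed.

Lemma rot_hi i : (n <= i)%nat -> rot n i = (n + cyc_succ n (i - n))%nat.
Proof. intros. unfold rot. now destruct (Nat.ltb_spec i n); [lia|]. Qed.

Lemma unrot_lo i : (i < n)%nat -> unrot n i = cyc_pred n i.
Proof. intros. unfold unrot. now destruct (Nat.ltb_spec i n); [|lia]. Qed.

Lemma unrot_hi i : (n <= i)%nat -> unrot n i = (n + cyc_pred n (i - n))%nat.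
Proof. intros. unfold unrot. now destruct (Nat.ltb_spec i n); [lia|]. Qed.

Lemma inverse_on_rot : inverse_on (2 * n) (rot n) (unrot n).
Proof.
  intros i Hi.
  pose proof (cyc_succ_lt i); pose proof (cyc_succ_lt (i - n));
  pose proof (cyc_pred_lt i); pose proof (cyc_pred_lt (i - n)).
  destruct (Nat.ltb_spec i n).
  - rewrite rot_lo, unrot_lo, rot_lo, unrot_lo, cyc_succ_pred, cyc_pred_succ by lia.
    repeat split; lia.
  - rewrite rot_hi, unrot_hi, rot_hi, unrot_hi by lia.
    rewrite !(Nat.add_comm n), !Nat.add_sub, cyc_succ_pred, cyc_pred_succ by lia.
    repeat split; lia.
Qed.

Lemma rot_lt i : (i < 2 * n)%nat -> (rot n i < 2 * n)%nat.
Proof. intros Hi. now destruct (inverse_on_rot i Hi). Qed.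

Lemma unrot_lt i : (i < 2 * n)%nat -> (unrot n i < 2 * n)%nat.
Proof. intros Hi. now destruct (inverse_on_rot i Hi) as (_ & ? & _). Qed.

Lemma unit_vec_unrot j m :
  (j < 2 * n)%nat -> (m < 2 * n)%nat -> unit_vec j (unrot n m) = unit_vec (rot n j) m.
Proof.
  intros Hj Hm. destruct (inverse_on_rot j Hj) as (_ & _ & _ & Hj').
  destruct (inverse_on_rot m Hm) as (_ & _ & Hm' & _). unfold unit_vec.
  destruct (Nat.eqb_spec (unrot n m) j), (Nat.eqb_spec m (rot n j)); congruence.
Qed.

Lemma Amat_rot i j : (i < 2 * n)%nat -> Amat n i j = unit_vec (rot n i) j.
Proof.
  intros Hi. pose proof (cyc_succ_lt i); pose proof (cyc_succ_lt (i - n)).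
  unfold Amat, Pmat, unit_vec, rot, cyc_succ in *.
  destruct (Nat.ltb_spec i n), (Nat.ltb_spec j n);
    repeat match goal with |- context [(?a =? ?b)%nat] => destruct (Nat.eqb_spec a b) end;
    first [reflexivity | lia].
Qed.

Lemma Xmat_cyc_pred_r y r k : Xmat n y r (cyc_pred n k) = Xmat n y (cyc_pred n r) k.
Proof.
  unfold Xmat, cyc_pred.
  rewrite Nat.Div0.add_mod_idemp_r, Nat.Div0.add_mod_idemp_l. f_equal. f_equal. lia.
Qed.

Lemma Xmat_comp_cyc_pred y r k :
  Xmat n (fun m => y (cyc_pred n m)) r k = Xmat n y (cyc_pred n r) k.
Proof.
  unfold Xmat, cyc_pred.
  rewrite Nat.Div0.add_mod_idemp_l, Nat.Div0.add_mod_idemp_l. f_equal. f_equal. lia.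
Qed.

(* The Hankel structure of [X(u)]: its entries depend only on [i + j]. *)
Lemma Jmat_unrot_r y i k : Jmat n y i (unrot n k) = Jmat n y (unrot n i) k.
Proof.
  unfold Jmat. rewrite !unrot_ltb. unfold unrot.
  destruct (Nat.ltb_spec i n), (Nat.ltb_spec k n); try reflexivity;
    rewrite Nat.add_comm, Nat.add_sub; [|f_equal]; apply Xmat_cyc_pred_r.
Qed.

Lemma Jmat_ext y y' i k :
  (forall m, (m < n)%nat -> y m = y' m) -> Jmat n y i k = Jmat n y' i k.
Proof.
  intros H. assert (Hmod : forall a, (a mod n < n)%nat) by (intros; apply Nat.mod_upper_bound; lia).
  unfold Jmat, Xmat. destruct (i <? n)%nat, (k <? n)%nat; rewrite ?H; auto.
Qed.

Lemma Jmat_comp_unrot y i k :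
  Jmat n (fun m => y (unrot n m)) i k = Jmat n y (unrot n i) k.
Proof.
  rewrite (Jmat_ext _ (fun m => y (cyc_pred n m))).
  - unfold Jmat. rewrite !unrot_ltb. unfold unrot.
    destruct (Nat.ltb_spec i n), (Nat.ltb_spec k n); try reflexivity;
      rewrite ?(Nat.add_comm n), ?Nat.add_sub; [|f_equal]; apply Xmat_comp_cyc_pred.
  - intros m Hm. unfold unrot. now destruct (Nat.ltb_spec m n); [|lia].
Qed.

End CyclicShift.

(* [ham_field n M x] is convertible to [ham_bilin n M x x]. *)
Definition ham_bilin (n : nat) (M : mat) (y z : vec) : vec :=
  mulmv (2 * n) (Jmat n y) (grad_quad (2 * n) M z).

Definition ham_jacobian (n : nat) (M : mat) (x : vec) : mat :=
  fun i j => ham_bilin n M (unit_vec j) x i + ham_bilin n M x (unit_vec j) i.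

Lemma mulmv_lin m M a b t i :
  mulmv m M (fun k => a k + t * b k) i = mulmv m M a i + t * mulmv m M b i.
Proof. unfold mulmv. rewrite <- vsum_scal, <- vsum_add. apply vsum_ext. intros; ring. Qed.

Lemma grad_quad_lin m M a b t i :
  grad_quad m M (fun k => a k + t * b k) i = grad_quad m M a i + t * grad_quad m M b i.
Proof. unfold grad_quad. rewrite !mulmv_lin. ring. Qed.

Lemma Jmat_lin n a b t i k :
  Jmat n (fun m => a m + t * b m) i k = Jmat n a i k + t * Jmat n b i k.
Proof. unfold Jmat, Xmat. destruct (i <? n)%nat, (k <? n)%nat; ring. Qed.

Lemma ham_field_along n M x e t i :
  ham_field n M (fun k => x k + t * e k) i =
  ham_field n M x i + t * (ham_bilin n M e x i + ham_bilin n M x e i)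
  + t ^ 2 * ham_field n M e i.
Proof.
  unfold ham_field, ham_bilin, mulmv. set (g := grad_quad (2 * n) M).
  rewrite <- !vsum_scal, <- !vsum_add, <- !vsum_scal, <- !vsum_add.
  apply vsum_ext. intros l _. unfold g. rewrite Jmat_lin, grad_quad_lin. ring.
Qed.

Lemma shift_unit_vec x j t : shift x j t = fun k => x k + t * unit_vec j k.
Proof.
  apply functional_extensionality. intros k. unfold shift, unit_vec.
  destruct (k =? j)%nat; ring.
Qed.

Lemma is_jacobian_ham_field n M x : is_jacobian (2 * n) (ham_field n M) x (ham_jacobian n M x).
Proof.
  intros i j _ _.
  apply (derivable_pt_lim_ext (fun t => ham_field n M x i + t * ham_jacobian n M x i j
                                        + t ^ 2 * ham_field n M (unit_vec j) i)).
  - intros t. rewrite shift_unit_vec, ham_field_along. reflexivity.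
  - apply is_derive_Reals. auto_derive; [easy | ring].
Qed.

Lemma is_jacobian_unique m f x D D' :
  is_jacobian m f x D -> is_jacobian m f x D' ->
  forall i j, (i < m)%nat -> (j < m)%nat -> D i j = D' i j.
Proof.
  intros HD HD' i j Hi Hj. exact (uniqueness_limite _ _ _ _ (HD i j Hi Hj) (HD' i j Hi Hj)).
Qed.

Lemma grad_quad_sym m M z i :
  (forall i j, (i < m)%nat -> (j < m)%nat -> M i j = M j i) -> (i < m)%nat ->
  grad_quad m M z i = mulmv m M z i.
Proof.
  intros Hsym Hi. unfold grad_quad, mulmv, trm.
  rewrite (vsum_ext m (fun k => M k i * z k) (fun k => M i k * z k)) by (intros; now rewrite Hsym).
  field.
Qed.

Lemma ham_bilin_ext n M y y' z z' i :
  (0 < n)%nat ->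
  (forall k, (k < 2 * n)%nat -> y k = y' k) -> (forall k, (k < 2 * n)%nat -> z k = z' k) ->
  ham_bilin n M y z i = ham_bilin n M y' z' i.
Proof.
  intros n_pos Hy Hz. unfold ham_bilin, grad_quad, mulmv.
  apply vsum_ext. intros l _. rewrite (Jmat_ext n n_pos y y') by (intros; apply Hy; lia).
  f_equal. f_equal. f_equal; apply vsum_ext; intros; now rewrite Hz.
Qed.

Lemma ham_bilin_unrot_l n M y z i : (0 < n)%nat ->
  ham_bilin n M (fun m => y (unrot n m)) z i = ham_bilin n M y z (unrot n i).
Proof.
  intros n_pos. unfold ham_bilin, mulmv. apply vsum_ext. intros. now rewrite Jmat_comp_unrot.
Qed.

Section AdmissibleHamiltonian.
Variables (n : nat) (Hm : mat).
Hypothesis n_pos : (0 < n)%nat.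
Hypothesis Hm_sym : forall i j, (i < 2 * n)%nat -> (j < 2 * n)%nat -> Hm i j = Hm j i.
Hypothesis Hm_commA : forall i j, (i < 2 * n)%nat -> (j < 2 * n)%nat ->
  mulmm (2 * n) (Amat n) Hm i j = mulmm (2 * n) Hm (trm (Amat n)) i j.

Local Notation AHm := (mulmm (2 * n) (Amat n) Hm).

Lemma AHm_entry i k : (i < 2 * n)%nat -> AHm i k = Hm (rot n i) k.
Proof.
  intros Hi. unfold mulmm. rewrite <- (vsum_unit_vec_lt _ _ (fun l => Hm l k)) by now apply rot_lt.
  apply vsum_ext. intros l _. rewrite Amat_rot by auto. ring.
Qed.

Lemma Hm_rot i j : (i < 2 * n)%nat -> (j < 2 * n)%nat -> Hm (rot n i) j = Hm i (rot n j).
Proof.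
  intros Hi Hj. rewrite <- AHm_entry, Hm_commA by auto. unfold mulmm, trm.
  rewrite <- (vsum_unit_vec_lt _ _ (Hm i)) by now apply rot_lt.
  apply vsum_ext. intros l _. now rewrite Amat_rot.
Qed.

Lemma mulmv_Hm_unrot z l : (l < 2 * n)%nat ->
  mulmv (2 * n) Hm (fun k => z (unrot n k)) l = mulmv (2 * n) Hm z (rot n l).
Proof.
  intros Hl. unfold mulmv.
  rewrite (vsum_mul_perm _ (unrot n) (rot n)) by now apply inverse_on_sym, inverse_on_rot.
  apply vsum_ext. intros k Hk. now rewrite Hm_rot.
Qed.

Lemma AHm_sym i j : (i < 2 * n)%nat -> (j < 2 * n)%nat -> AHm i j = AHm j i.
Proof. intros Hi Hj. rewrite !AHm_entry, Hm_rot, Hm_sym by auto using rot_lt. reflexivity. Qed.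

Lemma grad_quad_mulA z l : (l < 2 * n)%nat ->
  grad_quad (2 * n) AHm z l = grad_quad (2 * n) Hm (fun k => z (unrot n k)) l.
Proof.
  intros Hl. rewrite !grad_quad_sym, mulmv_Hm_unrot by auto using AHm_sym.
  unfold mulmv. apply vsum_ext. intros k Hk. now rewrite AHm_entry.
Qed.

Lemma ham_bilin_unrot_r y z i : (i < 2 * n)%nat ->
  ham_bilin n Hm y (fun k => z (unrot n k)) i = ham_bilin n Hm y z (unrot n i).
Proof.
  intros Hi. unfold ham_bilin, mulmv.
  rewrite (vsum_ext _ _ (fun l => Jmat n y i l * grad_quad (2 * n) Hm z (rot n l))).
  - rewrite (vsum_mul_perm _ (rot n) (unrot n)) by now apply inverse_on_rot.
    apply vsum_ext. intros. now rewrite Jmat_unrot_r.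
  - intros l Hl. rewrite !grad_quad_sym, mulmv_Hm_unrot by auto using rot_lt. reflexivity.
Qed.

Lemma ham_bilin_mulA y z i : (i < 2 * n)%nat ->
  ham_bilin n AHm y z i = ham_bilin n Hm y z (unrot n i).
Proof.
  intros Hi. rewrite <- ham_bilin_unrot_r by auto. unfold ham_bilin, mulmv.
  apply vsum_ext. intros. now rewrite grad_quad_mulA.
Qed.

Lemma ham_field_mulA x i : (i < 2 * n)%nat ->
  ham_field n AHm x i = ham_field n Hm x (unrot n i).
Proof. apply ham_bilin_mulA. Qed.

Lemma ham_jacobian_mulA x i j : (i < 2 * n)%nat ->
  ham_jacobian n AHm x i j = ham_jacobian n Hm x (unrot n i) j.
Proof. intros Hi. unfold ham_jacobian. now rewrite !ham_bilin_mulA. Qed.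

Lemma ham_jacobian_unrot x i j : (i < 2 * n)%nat -> (j < 2 * n)%nat ->
  ham_jacobian n Hm x (unrot n i) j = ham_jacobian n Hm x i (rot n j).
Proof.
  intros Hi Hj. unfold ham_jacobian.
  rewrite <- ham_bilin_unrot_l, <- ham_bilin_unrot_r by auto.
  f_equal; apply ham_bilin_ext; auto using unit_vec_unrot.
Qed.

End AdmissibleHamiltonian.

Theorem mainTheorem14 (n : nat) (Hm : mat) :
  (2 <= n)%nat -> admissible n Hm ->
  let f0 := ham_field n Hm in
  let f1 := ham_field n (mulmm (2 * n) (Amat n) Hm) in
  forall x : vec,
    (exists D0 D1 : mat,
        is_jacobian (2 * n) f0 x D0 /\ is_jacobian (2 * n) f1 x D1) /\
    (forall D0 D1 : mat,
        is_jacobian (2 * n) f0 x D0 -> is_jacobian (2 * n) f1 x D1 ->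
        (forall i, (i < 2 * n)%nat ->
           mulmv (2 * n) D0 (f1 x) i = mulmv (2 * n) D1 (f0 x) i) /\
        (forall i j, (i < 2 * n)%nat -> (j < 2 * n)%nat ->
           mulmm (2 * n) D0 D1 i j = mulmm (2 * n) D1 D0 i j)).
Proof.
  intros n_ge2 [Hm_sym Hm_commA] f0 f1 x. subst f0 f1.
  assert (n_pos : (0 < n)%nat) by lia.
  pose proof (inverse_on_rot n n_pos) as rot_inv.
  split.
  { eexists _, _. split; apply is_jacobian_ham_field. }
  intros D0 D1 HD0 HD1.
  assert (D0_eq : forall i j, (i < 2 * n)%nat -> (j < 2 * n)%nat ->
                    D0 i j = ham_jacobian n Hm x i j)
    by exact (is_jacobian_unique _ _ x _ _ HD0 (is_jacobian_ham_field n Hm x)).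
  assert (D0_twist : forall i j, (i < 2 * n)%nat -> (j < 2 * n)%nat ->
                       D0 (unrot n i) j = D0 i (rot n j)).
  { intros i j Hi Hj. rewrite !D0_eq by auto using unrot_lt, rot_lt.
    now apply ham_jacobian_unrot. }
  assert (D1_eq : forall i j, (i < 2 * n)%nat -> (j < 2 * n)%nat -> D1 i j = D0 (unrot n i) j).
  { intros i j Hi Hj. rewrite D0_eq, <- ham_jacobian_mulA by auto using unrot_lt.
    exact (is_jacobian_unique _ _ x _ _ HD1 (is_jacobian_ham_field _ _ x) i j Hi Hj). }
  split.
  - intros i Hi. apply (mulmv_twisted _ (rot n) (unrot n)); auto.
    intros k Hk. now apply ham_field_mulA.
  - intros i j Hi Hj.
    exact (mulmv_twisted _ _ _ D0 D1 (fun k => D0 k j) (fun k => D1 k j) i rot_inv D0_twist D1_eq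
             (fun k Hk => D1_eq k j Hk Hj) Hi).
Qed.
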